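(* Let $S$ be a skew lattice that is a strong distributive solution of the Yang–Baxter equation. Then (i) the lattice $S/\mathcal{D}$ is also a strong distributive solution, and (ii) $S$ is quasi-distributive, i.e. $S/\mathcal{D}$ is a distributive lattice.
   Context: A skew lattice is a set $S$ with two binary operations $\wedge,\vee$, each idempotent and associative, satisfying the absorption laws $x\wedge(x\vee y)=x=x\vee(x\wedge y)$ and $(x\wedge y)\vee y=y=(x\vee y)\wedge y$ for all $x,y\in S$. On a skew lattice, $x\,\mathcal{D}\,y$ means $x\wedge y\wedge x=x$ and $y\wedge x\wedge y=y$; $\mathcal{D}$ is a congruence and $S/\mathcal{D}$ is a lattice (the maximal lattice image). A map $r:X\times X\to X\times X$ is a set-theoretic solution of the Yang–Baxter equation if $(r\times\mathrm{id})\circ(\mathrm{id}\times r)\circ(r\times\mathrm{id})=(\mathrm{id}\times r)\circ(r\times\mathrm{id})\circ(\mathrm{id}\times r)$. A skew lattice $S$ is a strong distributive solution if the map $r(x,y)=(x\wedge y,x\vee y)$ on $S\times S$ is a set-theoretic solution of the Yang–Baxter equation. *)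

Set Implicit Arguments.

Record skew_lattice (S : Type) (meet join : S -> S -> S) : Prop := {
  sl_meet_idem : forall x, meet x x = x;
  sl_join_idem : forall x, join x x = x;
  sl_meet_assoc : forall x y z, meet x (meet y z) = meet (meet x y) z;
  sl_join_assoc : forall x y z, join x (join y z) = join (join x y) z;
  sl_abs1 : forall x y, meet x (join x y) = x;
  sl_abs2 : forall x y, join x (meet x y) = x;
  sl_abs3 : forall x y, join (meet x y) y = y;
  sl_abs4 : forall x y, meet (join x y) y = y
}.

Definition r12 {X} (r : X * X -> X * X) (t : X * X * X) : X * X * X :=
  let '(a, b, c) := t in let '(a', b') := r (a, b) in (a', b', c).
Definition r23 {X} (r : X * X -> X * X) (t : X * X * X) : X * X * X :=
  let '(a, b, c) := t in let '(b', c') := r (b, c) in (a, b', c').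

Definition is_YBE_solution {X} (r : X * X -> X * X) : Prop :=
  forall t, r12 r (r23 r (r12 r t)) = r23 r (r12 r (r23 r t)).

Definition skew_r {S} (meet join : S -> S -> S) (p : S * S) : S * S :=
  (meet (fst p) (snd p), join (fst p) (snd p)).

Definition strong_distributive_solution {S} (meet join : S -> S -> S) : Prop :=
  is_YBE_solution (skew_r meet join).

Definition skewD {S} (meet : S -> S -> S) (x y : S) : Prop :=
  meet (meet x y) x = x /\ meet (meet y x) y = y.

(* The quotient S/D is represented by S with equality replaced by D
   (D is a congruence, so the induced operations are well defined).
   Componentwise D-equivalence of triples: *)
Definition D3 {S} (meet : S -> S -> S) (t u : S * S * S) : Prop :=
  let '(a, b, c) := t in let '(a', b', c') := u in
  skewD meet a a' /\ skewD meet b b' /\ skewD meet c c'.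

Definition quotient_strong_distributive_solution {S} (meet join : S -> S -> S)
  : Prop :=
  forall t, D3 meet (r12 (skew_r meet join) (r23 (skew_r meet join)
                          (r12 (skew_r meet join) t)))
                    (r23 (skew_r meet join) (r12 (skew_r meet join)
                          (r23 (skew_r meet join) t))).

Definition quasi_distributive {S} (meet join : S -> S -> S) : Prop :=
  forall x y z, skewD meet (meet x (join y z)) (join (meet x y) (meet x z)).

From Stdlib Require Import List.
Import ListNotations.
Set Implicit Arguments.

(* In a band (idempotent semigroup) write x <= y for x y x = x;
   this is a preorder whose kernel is Green's relation D, and in a skew
   lattice it is the order of the lattice S/D: meets are greatest lower
   bounds and joins are least upper bounds.

   (i) D is reflexive, so an equation of triples holding in S holds up to D.
   (ii) Comparing middle components of the two sides of the Yang-Baxter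
   equation for r(x,y) = (x /\ y, x \/ y) on (a,b,c) gives
       (a /\ b) \/ ((a \/ b) /\ c) = (a \/ (b /\ c)) /\ (b \/ c),
   hence the modular-type inequality (a \/ b) /\ c <= a \/ (b /\ c).  In a
   lattice this inequality forces distributivity, i.e. S/D is distributive. *)

Section Band.

Variables (S : Type) (op : S -> S -> S).
Hypothesis op_assoc : forall x y z, op x (op y z) = op (op x y) z.
Hypothesis op_idem : forall x, op x x = x.

Definition band_le (x y : S) : Prop := op (op x y) x = x.

(* Words over S are evaluated in the free-monoid completion option S, so that
   associativity becomes list concatenation and equal subwords can be
   replaced inside any context. *)
Definition opt_op (a b : option S) : option S :=
  match a, b with
  | None, _ => b
  | _, None => a
  | Some x, Some y => Some (op x y)
  end.

Definition eval_word (w : list S) : option S :=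
  fold_right (fun x acc => opt_op (Some x) acc) None w.

Lemma opt_op_assoc a b c : opt_op a (opt_op b c) = opt_op (opt_op a b) c.
Proof. destruct a, b, c; simpl; try reflexivity; now rewrite op_assoc. Qed.

Lemma eval_word_app u v : eval_word (u ++ v) = opt_op (eval_word u) (eval_word v).
Proof.
  induction u as [|x u IH].
  - simpl. now destruct (eval_word v).
  - change (opt_op (Some x) (eval_word (u ++ v))
            = opt_op (opt_op (Some x) (eval_word u)) (eval_word v)).
    rewrite IH. apply opt_op_assoc.
Qed.

Lemma eval_word_congr p u v s :
  eval_word u = eval_word v -> eval_word (p ++ u ++ s) = eval_word (p ++ v ++ s).
Proof. intro E. rewrite !eval_word_app. now rewrite E. Qed.

Lemma eval_word_square u : eval_word (u ++ u) = eval_word u.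
Proof.
  rewrite eval_word_app. destruct (eval_word u) as [x|]; simpl; [now rewrite op_idem|easy].
Qed.

Lemma band_le_word x y : band_le x y <-> eval_word [x; y; x] = eval_word [x].
Proof.
  unfold band_le; simpl. rewrite op_assoc. split; [congruence|now injection 1].
Qed.

Lemma band_le_trans x y z : band_le x y -> band_le y z -> band_le x z.
Proof.
  rewrite !band_le_word. intros Exy Eyz.
  pose proof eval_word_congr as C. pose proof eval_word_square as Q.
  transitivity (eval_word [x;y;x;z;x]). { symmetry; exact (C [] _ _ [z;x] Exy). }
  transitivity (eval_word [x;y;z;y;x;z;x]). { symmetry; exact (C [x] _ _ [x;z;x] Eyz). }
  transitivity (eval_word [x;y;z;x;y;z;y;x;z;x]).
  { symmetry; exact (C [] [x;y;z;x;y;z] [x;y;z] [y;x;z;x] (Q [x;y;z])). }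
  transitivity (eval_word [x;y;z;x;y;x;z;x]). { exact (C [x;y;z;x] _ _ [x;z;x] Eyz). }
  transitivity (eval_word [x;y;z;x;y;x;z;x;y;x]). { symmetry; exact (C [x;y;z;x;y;x;z] _ _ [] Exy). }
  transitivity (eval_word [x;y;z;x;y;x]).
  { exact (C [x;y] [z;x;y;x;z;x;y;x] [z;x;y;x] [] (Q [z;x;y;x])). }
  transitivity (eval_word [x;y;z;x;y;z;y;x]). { symmetry; exact (C [x;y;z;x] _ _ [x] Eyz). }
  transitivity (eval_word [x;y;z;y;x]).
  { exact (C [] [x;y;z;x;y;z] [x;y;z] [y;x] (Q [x;y;z])). }
  transitivity (eval_word [x;y;x]). { exact (C [x] _ _ [x] Eyz). }
  exact Exy.
Qed.

Lemma band_le_glb x y z : band_le z x -> band_le z y -> band_le z (op x y).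
Proof.
  intros Hx Hy.
  assert (Ezxyz : eval_word [z;x;y;z] = eval_word [z]).
  { apply band_le_word in Hx, Hy.
    pose proof eval_word_congr as C. pose proof eval_word_square as Q.
    transitivity (eval_word [z;x;y;z;x;z]). { symmetry; exact (C [z;x;y] _ _ [] Hx). }
    transitivity (eval_word [z;y;z;x;y;z;x;z]). { symmetry; exact (C [] _ _ [x;y;z;x;z] Hy). }
    transitivity (eval_word [z;y;z;x;z]).
    { exact (C [z] [y;z;x;y;z;x] [y;z;x] [z] (Q [y;z;x])). }
    transitivity (eval_word [z;y;z]). { exact (C [z;y] _ _ [] Hx). }
    exact Hy. }
  simpl in Ezxyz. unfold band_le. rewrite <- !op_assoc. congruence.
Qed.

Lemma band_le_op_l x y : band_le (op x y) x.
Proof.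
  unfold band_le. now rewrite <- !op_assoc, (op_assoc x x y), op_idem,
    (op_assoc x y (op x y)), op_idem.
Qed.

Lemma band_le_op_r x y : band_le (op x y) y.
Proof. unfold band_le. now rewrite <- (op_assoc x y y), !op_idem. Qed.

End Band.

Lemma skew_le_reverse (S : Type) (meet join : S -> S -> S) x y :
  skew_lattice meet join -> band_le meet y x -> band_le join x y.
Proof.
  intros [mi ji ma ja a1 a2 a3 a4]. unfold band_le. intro Hy.
  assert (E : join y (meet x y) = meet x y).
  { rewrite <- Hy at 1. rewrite <- ma. apply a3. }
  assert (Ex : x = join x (join y (meet x y))) by (rewrite E; now rewrite a2).
  rewrite Ex at 2. rewrite (ja x y (meet x y)), ja, ji, <- ja. congruence.
Qed.

Lemma skew_lattice_dual (S : Type) (meet join : S -> S -> S) :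
  skew_lattice meet join -> skew_lattice join meet.
Proof. intros []; constructor; auto. Qed.

Section SkewLatticeOrder.

Variables (S : Type) (meet join : S -> S -> S).
Hypothesis SL : skew_lattice meet join.

Local Notation "x <= y" := (band_le meet x y).

Lemma sl_le_trans x y z : x <= y -> y <= z -> x <= z.
Proof. apply band_le_trans; apply SL. Qed.

Lemma sl_meet_lb_l x y : meet x y <= x.
Proof. apply band_le_op_l; apply SL. Qed.

Lemma sl_meet_lb_r x y : meet x y <= y.
Proof. apply band_le_op_r; apply SL. Qed.

Lemma sl_meet_glb x y z : z <= x -> z <= y -> z <= meet x y.
Proof. apply band_le_glb; apply SL. Qed.

Lemma sl_join_ub_l x y : x <= join x y.
Proof.
  apply (skew_le_reverse (skew_lattice_dual SL)).
  apply band_le_op_l; apply SL.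
Qed.

Lemma sl_join_ub_r x y : y <= join x y.
Proof.
  apply (skew_le_reverse (skew_lattice_dual SL)).
  apply band_le_op_r; apply SL.
Qed.

Lemma sl_join_lub x y z : x <= z -> y <= z -> join x y <= z.
Proof.
  intros Hx Hy. apply (skew_le_reverse (skew_lattice_dual SL)).
  apply band_le_glb; try apply SL; now apply (skew_le_reverse SL).
Qed.

End SkewLatticeOrder.

Lemma skewD_refl (S : Type) (meet : S -> S -> S) :
  (forall x, meet x x = x) -> forall x, skewD meet x x.
Proof. intros mi x. unfold skewD. now rewrite !mi. Qed.

Lemma quotient_solution_of_solution (S : Type) (meet join : S -> S -> S) :
  skew_lattice meet join -> strong_distributive_solution meet join ->
  quotient_strong_distributive_solution meet join.
Proof.
  intros SL YBE t. rewrite (YBE t).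
  destruct (r23 _ _) as [[a b] c]. simpl.
  pose proof (skewD_refl _ (sl_meet_idem SL)) as refl. auto.
Qed.

Lemma ybe_middle_identity (S : Type) (meet join : S -> S -> S) a b c :
  strong_distributive_solution meet join ->
  join (meet a b) (meet (join a b) c) = meet (join a (meet b c)) (join b c).
Proof.
  intro YBE. specialize (YBE (a, b, c)).
  unfold r12, r23, skew_r in YBE; simpl in YBE. congruence.
Qed.

Lemma ybe_modular_inequality (S : Type) (meet join : S -> S -> S) a b c :
  skew_lattice meet join -> strong_distributive_solution meet join ->
  band_le meet (meet (join a b) c) (join a (meet b c)).
Proof.
  intros SL YBE.
  apply (sl_le_trans SL) with (y := join (meet a b) (meet (join a b) c)).
  - apply (sl_join_ub_r SL).
  - rewrite (ybe_middle_identity a b c YBE). apply (sl_meet_lb_l SL).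
Qed.

Section DistributivityCriterion.

Variables (S : Type) (meet join : S -> S -> S).
Hypothesis SL : skew_lattice meet join.
Hypothesis modular_ineq :
  forall a b c, band_le meet (meet (join a b) c) (join a (meet b c)).

Local Notation "x <= y" := (band_le meet x y).

Let trans := sl_le_trans SL.
Let lb_l := sl_meet_lb_l SL.
Let lb_r := sl_meet_lb_r SL.
Let glb := sl_meet_glb SL.
Let ub_l := sl_join_ub_l SL.
Let ub_r := sl_join_ub_r SL.
Let lub := sl_join_lub SL.

Lemma meet_join_le_join_meet x y z :
  meet x (join y z) <= join (meet x y) (meet x z).
Proof.
  (* Chain: x(y+z) <= (y + zx)x <= (zx + y)x <= zx + yx <= xy + xz. *)
  assert (into_modular : meet x (join y z) <= meet (join y (meet z x)) x).
  { apply glb; [|apply lb_l]. apply trans with (meet (join y z) x).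
    - apply glb; [apply lb_r|apply lb_l].
    - apply modular_ineq. }
  assert (swap_join : meet (join y (meet z x)) x <= meet (join (meet z x) y) x).
  { apply glb; [|apply lb_r]. apply trans with (join y (meet z x)); [apply lb_l|].
    apply lub; [apply ub_r|apply ub_l]. }
  assert (reorder_meets : join (meet z x) (meet y x) <= join (meet x y) (meet x z)).
  { apply lub.
    - apply trans with (meet x z); [apply glb; [apply lb_r|apply lb_l]|apply ub_r].
    - apply trans with (meet x y); [apply glb; [apply lb_r|apply lb_l]|apply ub_l]. }
  apply (trans into_modular), (trans swap_join), (trans (modular_ineq _ _ _)), reorder_meets.
Qed.

Lemma join_meet_le_meet_join x y z :
  join (meet x y) (meet x z) <= meet x (join y z).
Proof.
  apply lub; apply glb.
  - apply lb_l.
  - apply trans with y; [apply lb_r|apply ub_l].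
  - apply lb_l.
  - apply trans with z; [apply lb_r|apply ub_r].
Qed.

Lemma quasi_distributive_of_modular_inequality : quasi_distributive meet join.
Proof.
  intros x y z. split.
  - apply meet_join_le_join_meet.
  - apply join_meet_le_meet_join.
Qed.

End DistributivityCriterion.

Theorem mainTheorem5 (S : Type) (meet join : S -> S -> S) :
  skew_lattice meet join ->
  strong_distributive_solution meet join ->
  quotient_strong_distributive_solution meet join /\ quasi_distributive meet join.
Proof.
  intros SL YBE. split.
  - exact (quotient_solution_of_solution SL YBE).
  - apply (quasi_distributive_of_modular_inequality SL).
    intros a b c. exact (ybe_modular_inequality a b c SL YBE).
Qed.
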